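(* The Waterfilling Mechanism (with exact bucketing) described in the context satisfies the Sharing Incentive: for every nonempty finite set $S$ of analysts (each with workload $W_l$, weight $s_l>0$ and strategy $A_l$ satisfying $W_l=W_lA_l^+A_l$ with every column of $A_l$ of $L_1$ norm $1$) and every $i\in S$, $\mathrm{Err}_i(S)\le \mathrm{Err}_i(\{i\})$, i.e. analyst $i$'s expected error when all analysts in $S$ are served jointly with total budget $(\sum_{l\in S}s_l)\varepsilon$ is at most its expected error when served alone by the same mechanism with budget $s_i\varepsilon$.
   Context: Data are a vector $x\in\mathbb{R}^n$. Fix $\varepsilon>0$. Each analyst $l$ has a workload matrix $W_l$, a weight $s_l>0$ (entitled to budget $s_l\varepsilon$), and a strategy matrix $A_l$ chosen for $W_l$ alone by a selection step, with $W_l = W_lA_l^+A_l$ ($^+$ the Moore–Penrose pseudo-inverse) and every column of $A_l$ of $L_1$ norm $1$. Fix a norm $\|\cdot\|$ on row vectors. Waterfilling Mechanism for a collective $S$: maintain buckets $B$ (unit vectors $e$ with weights $f_B(e)>0$), initially empty; for each $l\in S$ and each nonzero row $v$ of $s_lA_l$, set $e=v/\|v\|$; if $e\in B$ increase $f_B(e)$ by $\|v\|$, else add $e$ with $f_B(e)=\|v\|$. The joint strategy $A$ has rows $f_B(e)e$, $e\in B$. With $\varepsilon_S=(\sum_{l\in S}s_l)\varepsilon$, release $y=Ax+\eta$, $\eta$ i.i.d. Laplace of scale $\|A\|_1/\varepsilon_S$ ($\|A\|_1$ = maximum column $L_1$ norm). Analyst $i$ estimates $W_ix$ by $W_iA^+y$,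 with expected error $\mathrm{Err}_i(S)=\frac{2\|A\|_1^2}{\varepsilon_S^2}\|W_iA^+\|_F^2$. *)

From HB Require Import structures.
From Stdlib Require Import ClassicalEpsilon.
From mathcomp Require Import all_boot all_order all_algebra.
From mathcomp Require Import reals.
Set Implicit Arguments. Unset Strict Implicit. Unset Printing Implicit Defensive.
Import Order.TTheory GRing.Theory Num.Theory.
Local Open Scope ring_scope.

Section Defs.
Variable R : realType.

Definition is_norm (n : nat) (N : 'rV[R]_n -> R) : Prop :=
  [/\ forall v, 0 <= N v,
      forall v, N v = 0 -> v = 0,
      forall (c : R) v, N (c *: v) = `|c| * N v
    & forall u v, N (u + v) <= N u + N v].

(* The four Penrose conditions (real matrices, so adjoint = transpose). *)
Definition penrose (m n : nat) (A : 'M[R]_(m, n)) (X : 'M[R]_(n, m)) : Prop :=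
  [/\ A *m X *m A = A, X *m A *m X = X,
      (A *m X)^T = A *m X & (X *m A)^T = X *m A].

(* Moore-Penrose pseudo-inverse (exists and is unique over the reals). *)
Definition mpinv (m n : nat) (A : 'M[R]_(m, n)) : 'M[R]_(n, m) :=
  epsilon (inhabits 0) (fun X => penrose A X).

Definition norm1 (m n : nat) (A : 'M[R]_(m, n)) : R :=
  \big[Num.max/0]_(j < n) \sum_(i < m) `|A i j|.

Definition frob2 (m n : nat) (A : 'M[R]_(m, n)) : R :=
  \sum_(i < m) \sum_(j < n) (A i j) ^+ 2.

Variable n : nat.
Variable N : 'rV[R]_n -> R.

(* Buckets: a list of (unit vector e, weight f_B(e)). Add a unit vector e
   with weight w: merge if e already present, else append. *)
Fixpoint bucket_add (B : seq ('rV[R]_n * R)) (e : 'rV[R]_n) (w : R)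
  : seq ('rV[R]_n * R) :=
  match B with
  | [::] => [:: (e, w)]
  | (e', f) :: B' => if e' == e then (e', f + w) :: B'
                     else (e', f) :: bucket_add B' e w
  end.

Definition bucket_insert (B : seq ('rV[R]_n * R)) (v : 'rV[R]_n) :=
  bucket_add B ((N v)^-1 *: v) (N v).

Variables (I : finType) (k : I -> nat) (s : I -> R).
Variable A : forall l : I, 'M[R]_(k l, n).

Definition wf_rows (S : {set I}) : seq 'rV[R]_n :=
  flatten [seq [seq row j (s l *: A l) | j <- enum 'I_(k l)
                                        & row j (s l *: A l) != 0]
          | l <- enum S].

Definition wf_buckets (S : {set I}) : seq ('rV[R]_n * R) :=
  foldl bucket_insert [::] (wf_rows S).

Definition wf_strategy (S : {set I}) : 'M[R]_(size (wf_buckets S), n) :=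
  \matrix_(r < size (wf_buckets S))
     ((nth (0, 0) (wf_buckets S) r).2 *: (nth (0, 0) (wf_buckets S) r).1).

Variable eps : R.
Variable p : I -> nat.
Variable W : forall l : I, 'M[R]_(p l, n).

Definition eps_S (S : {set I}) : R := (\sum_(l in S) s l) * eps.

Definition Err (S : {set I}) (i : I) : R :=
  2 * (norm1 (wf_strategy S)) ^+ 2 / (eps_S S) ^+ 2
    * frob2 (W i *m mpinv (wf_strategy S)).

End Defs.

(* Both errors carry the same prefactor [2 / eps^2]: every column of [A_l] has L1 norm 1,
   so every column of the joint strategy of [S] has L1 norm [sum_(l in S) s_l], which
   cancels the budget [eps_S].  Every bucket of analyst [i] alone reappears among the
   buckets of [S] with at least the same weight, hence the single strategy [A_{i}] equals
   [D A_S] for a matrix [D] that embeds rows injectively and scales them by factors at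
   most 1, so that [D] does not increase Frobenius norms.  As [W_i] lies in the row space
   of [A_{i}], [Y = W_i A_{i}^+ D] solves [Y A_S = W_i], and [W_i A_S^+ = Y A_S A_S^+] is
   the orthogonal projection of [Y], whence
   [|W_i A_S^+|_F <= |Y|_F <= |W_i A_{i}^+|_F]. *)

From Stdlib Require Import ClassicalEpsilon.
From mathcomp Require Import all_boot all_order all_algebra.
From mathcomp Require Import reals.
From mathcomp Require Import ring.
Set Implicit Arguments. Unset Strict Implicit. Unset Printing Implicit Defensive.
Import Order.TTheory GRing.Theory Num.Theory.
Local Open Scope ring_scope.

Section Frobenius.
Variable R : realType.

Lemma frob2_tr m n (M : 'M[R]_(m, n)) : frob2 M = \tr (M *m M^T).
Proof.
rewrite /frob2 /mxtrace; apply: eq_bigr => i _; rewrite mxE.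
by apply: eq_bigr => j _; rewrite mxE expr2.
Qed.

Lemma frob2_ge0 m n (M : 'M[R]_(m, n)) : 0 <= frob2 M.
Proof. by apply: sumr_ge0 => i _; apply: sumr_ge0 => j _; apply: sqr_ge0. Qed.

Lemma frob2_eq0 m n (M : 'M[R]_(m, n)) : frob2 M = 0 -> M = 0.
Proof.
have row_ge0 i : 0 <= \sum_j M i j ^+ 2 by apply: sumr_ge0 => j _; apply: sqr_ge0.
move=> /eqP; rewrite psumr_eq0 // => /allP M0; apply/matrixP => i j.
move: (M0 i (mem_index_enum _)); rewrite implyTb psumr_eq0 => [/allP/(_ j)|j' _].
  by rewrite mem_index_enum implyTb sqrf_eq0 mxE => /(_ isT)/eqP.
exact: sqr_ge0.
Qed.

Lemma gram_unitmx r n (G : 'M[R]_(r, n)) : row_free G -> G *m G^T \in unitmx.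
Proof.
move=> freeG; rewrite -row_free_unit -kermx_eq0; apply/eqP/row_matrixP => j.
set u := row j _; have uGG : u *m (G *m G^T) = 0 by rewrite -row_mul mulmx_ker row0.
have : frob2 (u *m G) = 0.
  by rewrite frob2_tr trmx_mul mulmxA -(mulmxA u) uGG mul0mx mxtrace0.
by move/frob2_eq0; rewrite row0 -(mul0mx _ G); apply: row_free_inj.
Qed.

Lemma penrose_full_rank_factor m n r (C : 'M[R]_(m, r)) (F : 'M[R]_(r, n)) :
  C^T *m C \in unitmx -> F *m F^T \in unitmx ->
  penrose (C *m F) (F^T *m invmx (F *m F^T) *m invmx (C^T *m C) *m C^T).
Proof.
move=> uC uF; set P := invmx (F *m F^T); set Q := invmx (C^T *m C).
have FP : F *m F^T *m P = 1%:M by rewrite mulmxV.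
have QC : Q *m (C^T *m C) = 1%:M by rewrite mulVmx.
have PT : P^T = P by rewrite /P trmx_inv trmx_mul trmxK.
have QT : Q^T = Q by rewrite /Q trmx_inv trmx_mul trmxK.
have AX : C *m F *m (F^T *m P *m Q *m C^T) = C *m Q *m C^T.
  by rewrite !mulmxA -(mulmxA C F) -(mulmxA C (F *m F^T)) FP mulmx1.
have XA : F^T *m P *m Q *m C^T *m (C *m F) = F^T *m P *m F.
  by rewrite -!mulmxA (mulmxA C^T) (mulmxA Q) QC mul1mx.
split.
- by rewrite AX -!mulmxA (mulmxA C^T) (mulmxA Q) QC mul1mx.
- by rewrite XA -!mulmxA (mulmxA F) (mulmxA (F *m F^T)) FP mul1mx.
- by rewrite AX !trmx_mul trmxK QT mulmxA.
- by rewrite XA !trmx_mul trmxK PT mulmxA.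
Qed.

Lemma mpinvP m n (A : 'M[R]_(m, n)) : penrose A (mpinv A).
Proof.
have [X AX] : exists X, penrose A X.
  rewrite -(mulmx_base A); eexists; apply: penrose_full_rank_factor.
    rewrite -{2}[col_base A]trmxK gram_unitmx // /row_free mxrank_tr; exact: col_base_full.
  exact/gram_unitmx/row_base_free.
exact: epsilon_spec (inhabits 0) _ (ex_intro _ X AX).
Qed.

Lemma mulmx_mpinv_sub p m n (W : 'M[R]_(p, n)) (A : 'M[R]_(m, n)) :
  (W <= A)%MS -> W *m mpinv A *m A = W.
Proof.
by case/submxP=> Y ->; case: (mpinvP A) => AXA _ _ _; rewrite -!mulmxA (mulmxA A) AXA.
Qed.

Lemma frob2D_orthogonal p m (U V : 'M[R]_(p, m)) :
  U *m V^T = 0 -> frob2 (U + V) = frob2 U + frob2 V.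
Proof.
move=> UV; have VU : V *m U^T = (U *m V^T)^T by rewrite trmx_mul trmxK.
rewrite !frob2_tr [(U + V)^T]raddfD /= mulmxDl !mulmxDr !mxtraceD VU UV trmx0 mxtrace0.
by rewrite addr0 add0r.
Qed.

Lemma frob2_penrose_proj_le p m n (A : 'M[R]_(m, n)) (X : 'M[R]_(n, m)) (Y : 'M[R]_(p, m)) :
  penrose A X -> frob2 (Y *m A *m X) <= frob2 Y.
Proof.
case=> AXA _ AXsym _.
have PQ : A *m X *m (1%:M - A *m X) = 0 by rewrite mulmxBr mulmx1 mulmxA AXA subrr.
have orth : Y *m (A *m X) *m (Y *m (1%:M - A *m X))^T = 0.
  rewrite trmx_mul linearB /= trmx1 AXsym (mulmxA (Y *m (A *m X))).
  by rewrite -(mulmxA Y (A *m X)) PQ mulmx0 mul0mx.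
have splitY : Y = Y *m (A *m X) + Y *m (1%:M - A *m X).
  by rewrite -mulmxDr addrC subrK mulmx1.
by rewrite {2}splitY frob2D_orthogonal // mulmxA lerDl frob2_ge0.
Qed.

Lemma frob2_mul_mpinv_le p m n (A : 'M[R]_(m, n)) (Y : 'M[R]_(p, m)) :
  frob2 (Y *m A *m mpinv A) <= frob2 Y.
Proof. exact/frob2_penrose_proj_le/mpinvP. Qed.

Lemma frob2_mul_diag_le p m (X : 'M[R]_(p, m)) (c : 'rV[R]_m) :
  (forall j, c 0 j ^+ 2 <= 1) -> frob2 (X *m diag_mx c) <= frob2 X.
Proof.
move=> c_le1; rewrite mul_mx_diag; apply: ler_sum => i _; apply: ler_sum => j _.
by rewrite mxE exprMn ler_piMr ?sqr_ge0.
Qed.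

Lemma frob2_mul_rowsub1 p a b (f : 'I_a -> 'I_b) (X : 'M[R]_(p, a)) :
  injective f -> frob2 (X *m rowsub f 1%:M) = frob2 X.
Proof.
move=> injf; have PPT : rowsub f 1%:M *m (rowsub f 1%:M)^T = 1%:M :> 'M[R]_a.
  by apply/matrixP => r r'; rewrite mul_rowsub_mx mul1mx !mxE (inj_eq injf) eq_sym.
by rewrite !frob2_tr trmx_mul !mulmxA -(mulmxA X) PPT mulmx1.
Qed.

Lemma frob2_mulmx_mpinv_factor_le p m1 m2 n (W : 'M[R]_(p, n))
    (A : 'M[R]_(m1, n)) (B : 'M[R]_(m2, n)) (D : 'M[R]_(m1, m2)) :
  (W <= A)%MS -> D *m B = A -> (forall X : 'M[R]_(p, m1), frob2 (X *m D) <= frob2 X) ->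
  frob2 (W *m mpinv B) <= frob2 (W *m mpinv A).
Proof.
move=> WA DBA D_le; have WE : W = W *m mpinv A *m D *m B.
  by rewrite -mulmxA DBA mulmx_mpinv_sub.
by rewrite {1}WE; apply: le_trans (frob2_mul_mpinv_le _ _) (D_le _).
Qed.

End Frobenius.

Lemma bigmax_ord_const (R : realDomainType) m (c : R) :
  0 <= c -> \big[Num.max/0]_(j < m) c = (m != 0)%:R * c.
Proof.
move=> c_ge0; rewrite big_const_ord; elim: m => [|m IH] /=; first by rewrite mul0r.
by rewrite IH mul1r; case: (m != 0); rewrite ?mul1r ?mul0r ?maxxx ?max_l.
Qed.

Section Buckets.
Variables (R : realType) (n : nat).
Implicit Types (B : seq ('rV[R]_n * R)) (e x : 'rV[R]_n) (w : R).

Definition bucket_keys B := [seq b.1 | b <- B].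
Definition bucket_weight B x := \sum_(b <- B | b.1 == x) b.2.
Definition bucket_colsum B (j : 'I_n) := \sum_(b <- B) `|b.2 * b.1 0 j|.
Definition pos_weights B := all (fun b => 0 < b.2) B.
(* [wf_strategy N s A S] is convertible to [bucket_mx (wf_buckets N s A S)]. *)
Definition bucket_mx B : 'M[R]_(size B, n) :=
  \matrix_(r < size B) ((nth (0, 0) B r).2 *: (nth (0, 0) B r).1).

Lemma mem_keys_bucket_add B e w x :
  (x \in bucket_keys (bucket_add B e w)) = (x == e) || (x \in bucket_keys B).
Proof.
elim: B => [|[e' f] B IH] /=; first by rewrite in_cons orbF.
case: eqP => [-> | _] /=; rewrite !in_cons ?IH; first by case: (x == e); rewrite ?orbT.
by rewrite orbCA.
Qed.

Lemma uniq_keys_bucket_add B e w :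
  uniq (bucket_keys B) -> uniq (bucket_keys (bucket_add B e w)).
Proof.
elim: B => [|[e' f] B IH] //= /andP[e'B uB].
case: eqP => [_ | /eqP e'e] /=; first by rewrite e'B.
by rewrite mem_keys_bucket_add negb_or e'e e'B IH.
Qed.

Lemma pos_weights_bucket_add B e w :
  0 < w -> pos_weights B -> pos_weights (bucket_add B e w).
Proof.
move=> w_gt0; elim: B => [|[e' f] B IH] /=; first by rewrite w_gt0.
by case/andP=> f_gt0 posB; case: eqP => _ /=; rewrite ?addr_gt0 ?f_gt0 ?IH.
Qed.

Lemma bucket_weight_add B e w x :
  bucket_weight (bucket_add B e w) x = bucket_weight B x + (x == e)%:R * w.
Proof.
rewrite /bucket_weight; elim: B => [|[e' f] B IH] /=.
  by rewrite big_cons !big_nil add0r [x == e]eq_sym; case: (e == x); rewrite ?addr0 ?mul1r ?mul0r.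
case: eqP => [-> | _]; rewrite !big_cons /= ?IH; last by case: ifP; rewrite ?addrA.
by rewrite [x == e]eq_sym; case: (e == x); rewrite ?mul1r ?mul0r ?addr0 // addrAC.
Qed.

Lemma bucket_colsum_add B e w j : 0 <= w -> pos_weights B ->
  bucket_colsum (bucket_add B e w) j = bucket_colsum B j + `|w * e 0 j|.
Proof.
rewrite /bucket_colsum => w_ge0; elim: B => [|[e' f] B IH] /=.
  by rewrite big_seq1 big_nil add0r.
case/andP=> /ltW f_ge0 posB; case: eqP => [-> | _]; rewrite !big_cons /= ?IH //.
  rewrite !normrM (ger0_norm f_ge0) (ger0_norm w_ge0) ger0_norm ?addr_ge0 //.
  by rewrite mulrDl addrAC.
by rewrite addrA.
Qed.

Lemma bucket_weight_notin B x : x \notin bucket_keys B -> bucket_weight B x = 0.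
Proof.
move=> xB; rewrite /bucket_weight big_seq_cond big1 // => b /andP[bB /eqP b1].
by move: xB; rewrite -b1 map_f.
Qed.

Lemma bucket_weight_nth B (r : 'I_(size B)) : uniq (bucket_keys B) ->
  bucket_weight B (nth (0, 0) B r).1 = (nth (0, 0) B r).2.
Proof.
case: r => r /=; elim: B r => [|b B IH] [|r] //= r_lt /andP[bB uB].
  rewrite /bucket_weight big_cons eqxx -/(bucket_weight B _).
  by rewrite bucket_weight_notin ?addr0.
rewrite /bucket_weight big_cons -/(bucket_weight B _) IH // ifN //.
by apply: contraNneq bB => ->; rewrite (map_f (fun b => b.1)) ?mem_nth.
Qed.

Lemma bucket_mx_colsum B j :
  \sum_(r < size B) `|bucket_mx B r j| = bucket_colsum B j.
Proof.
by rewrite /bucket_colsum (big_nth (0, 0)) big_mkord; apply: eq_bigr => r _; rewrite !mxE.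
Qed.

Lemma key_sub_bucket_mx B x :
  pos_weights B -> x \in bucket_keys B -> (x <= bucket_mx B)%MS.
Proof.
move=> posB /(nthP 0)[r r_lt <-]; rewrite size_map in r_lt.
have f_gt0 : 0 < (nth (0, 0) B r).2 by apply: (allP posB); rewrite mem_nth.
have -> : nth 0 (bucket_keys B) r = (nth (0, 0) B r).2^-1 *: row (Ordinal r_lt) (bucket_mx B).
  by apply/rowP => j; rewrite !mxE (nth_map (0, 0)) // mulKf ?gt_eqF.
by rewrite scalemx_sub ?row_sub.
Qed.

(* [D] maps row [r] of [bucket_mx B] to the row of [bucket_mx B'] with the same key,
   scaled by the ratio of the two weights. *)
Lemma bucket_mx_dominated B B' :
  pos_weights B -> uniq (bucket_keys B) -> uniq (bucket_keys B') ->
  (forall x, x \in bucket_keys B -> bucket_weight B x <= bucket_weight B' x) ->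
  exists D, D *m bucket_mx B' = bucket_mx B /\
            forall p (X : 'M[R]_(p, size B)), frob2 (X *m D) <= frob2 X.
Proof.
move=> posB uB uB' le_weight; pose key (r : 'I_(size B)) := (nth (0, 0) B r).1.
have keyB r : key r \in bucket_keys B by rewrite (map_f (fun b => b.1)) ?mem_nth.
have weight_gt0 r : 0 < bucket_weight B (key r).
  by rewrite bucket_weight_nth //; apply: (allP posB); rewrite mem_nth.
have weight'_gt0 r : 0 < bucket_weight B' (key r).
  exact: lt_le_trans (weight_gt0 r) (le_weight _ (keyB r)).
have keyB' r : key r \in bucket_keys B'.
  by apply: contraTT (weight'_gt0 r) => /bucket_weight_notin ->; rewrite ltxx.
have phi_lt r : (index (key r) (bucket_keys B') < size B')%N.
  by rewrite -(size_map (fun b => b.1)) index_mem.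
pose phi r := Ordinal (phi_lt r).
have key_phi r : (nth (0, 0) B' (phi r)).1 = key r.
  by rewrite -(nth_map _ 0) ?nth_index.
have weight_phi r : (nth (0, 0) B' (phi r)).2 = bucket_weight B' (key r).
  by rewrite -[in RHS]key_phi bucket_weight_nth.
have key_index r : index (key r) (bucket_keys B) = r.
  by rewrite /key -(nth_map _ 0) ?index_uniq ?size_map.
have phi_inj : injective phi.
  by move=> r1 r2 eq12; apply: val_inj; rewrite /= -key_index -key_phi eq12 key_phi key_index.
pose c := \row_r (bucket_weight B (key r) / bucket_weight B' (key r)).
exists (diag_mx c *m rowsub phi 1%:M); split.
  apply/matrixP => r j; rewrite -mulmxA -rowsubE mul_diag_mx !mxE weight_phi key_phi.
  by rewrite -bucket_weight_nth // mulrA divfK ?gt_eqF.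
move=> p X; rewrite mulmxA frob2_mul_rowsub1 // frob2_mul_diag_le // => r.
by rewrite mxE expr_le1 ?divr_ge0 ?ler_pdivrMr ?mul1r ?le_weight ?ltW.
Qed.

End Buckets.

Section Insertion.
Variables (R : realType) (n : nat) (N : 'rV[R]_n -> R).
Hypothesis N_gt0 : forall v, v != 0 -> 0 < N v.
Implicit Types (B : seq ('rV[R]_n * R)) (vs : seq 'rV[R]_n).

Lemma uniq_keys_foldl_insert B vs :
  uniq (bucket_keys B) -> uniq (bucket_keys (foldl (bucket_insert N) B vs)).
Proof. by elim: vs B => [|v vs IH] B //= uB; apply/IH/uniq_keys_bucket_add. Qed.

Lemma pos_weights_foldl_insert B vs : all (fun v => v != 0) vs ->
  pos_weights B -> pos_weights (foldl (bucket_insert N) B vs).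
Proof.
elim: vs B => [|v vs IH] B //= /andP[v0 vs0] posB.
exact/IH/pos_weights_bucket_add/posB/N_gt0.
Qed.

Lemma bucket_colsum_foldl_insert B vs j : all (fun v => v != 0) vs -> pos_weights B ->
  bucket_colsum (foldl (bucket_insert N) B vs) j = bucket_colsum B j + \sum_(v <- vs) `|v 0 j|.
Proof.
elim: vs B => [|v vs IH] B /=; first by rewrite big_nil addr0.
case/andP=> v0 vs0 posB; have Nv_gt0 := N_gt0 v0.
rewrite IH ?pos_weights_bucket_add // bucket_colsum_add ?ltW // big_cons addrA.
by rewrite mxE mulrA mulfV ?gt_eqF ?mul1r.
Qed.

Lemma bucket_weight_foldl_insert B vs x :
  bucket_weight (foldl (bucket_insert N) B vs) x
  = bucket_weight B x + \sum_(v <- vs | (N v)^-1 *: v == x) N v.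
Proof.
elim: vs B => [|v vs IH] B /=; first by rewrite big_nil addr0.
rewrite IH bucket_weight_add big_cons -addrA eq_sym.
by case: eqP; rewrite ?mul1r ?mul0r ?add0r.
Qed.

End Insertion.

Section Waterfilling.
Variables (R : realType) (n : nat) (N : 'rV[R]_n -> R).
Hypothesis normN : is_norm N.
Variables (I : finType) (k p : I -> nat) (s : I -> R) (eps : R).
Variables (A : forall l : I, 'M[R]_(k l, n)) (W : forall l : I, 'M[R]_(p l, n)).
Implicit Types (S : {set I}) (v x : 'rV[R]_n).

Lemma norm_ge0 v : 0 <= N v.
Proof. by case: normN. Qed.

Lemma norm_gt0 v : v != 0 -> 0 < N v.
Proof.
case: normN => N_ge0 N_eq0 _ _; rewrite lt_def N_ge0 andbT.
by apply: contra => /eqP/N_eq0->.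
Qed.

Definition analyst_rows l :=
  [seq row r (s l *: A l) | r <- enum 'I_(k l) & row r (s l *: A l) != 0].

Lemma wf_rowsE S : wf_rows s A S = flatten [seq analyst_rows l | l <- enum S].
Proof. by []. Qed.

Lemma big_analyst_rows l (F : 'rV[R]_n -> R) : F 0 = 0 ->
  \sum_(v <- analyst_rows l) F v = \sum_(r < k l) F (row r (s l *: A l)).
Proof.
move=> F0; rewrite big_map big_filter big_enum_cond /= big_mkcond.
by apply: eq_bigr => r _; case: eqP => [->|].
Qed.

Lemma wf_rows_neq0 S : all (fun v => v != 0) (wf_rows s A S).
Proof.
by apply/allP => v /flattenP[_ /mapP[l _ ->] /mapP[r]]; rewrite mem_filter => /andP[? _] ->.
Qed.

Lemma uniq_keys_wf_buckets S : uniq (bucket_keys (wf_buckets N s A S)).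
Proof. exact: uniq_keys_foldl_insert. Qed.

Lemma pos_weights_wf_buckets S : pos_weights (wf_buckets N s A S).
Proof. by apply: (pos_weights_foldl_insert norm_gt0) => //; apply: wf_rows_neq0. Qed.

Lemma bucket_weight_wf_buckets S x : bucket_weight (wf_buckets N s A S) x
  = \sum_(v <- wf_rows s A S | (N v)^-1 *: v == x) N v.
Proof. by rewrite bucket_weight_foldl_insert /bucket_weight big_nil add0r. Qed.

Lemma norm1_wf_strategy S :
  (forall l, l \in S -> 0 < s l) ->
  (forall l, l \in S -> forall j : 'I_n, \sum_(r < k l) `|A l r j| = 1) ->
  norm1 (wf_strategy N s A S) = (n != 0)%:R * \sum_(l in S) s l.
Proof.
move=> s_gt0 colA; have sum_ge0 : 0 <= \sum_(l in S) s l.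
  by apply: sumr_ge0 => l /s_gt0/ltW.
rewrite /norm1 -(bigmax_ord_const n sum_ge0).
apply: eq_bigr => j _; rewrite (bucket_mx_colsum (wf_buckets N s A S)).
rewrite (bucket_colsum_foldl_insert norm_gt0) ?wf_rows_neq0 // /bucket_colsum big_nil add0r.
rewrite wf_rowsE big_flatten big_map big_enum /=; apply: eq_bigr => l lS.
rewrite big_analyst_rows ?mxE ?normr0 // -[RHS]mulr1 -(colA l lS j) mulr_sumr.
by apply: eq_bigr => r _; rewrite !mxE normrM gtr0_norm ?s_gt0.
Qed.

Lemma bucket_weight_wf_buckets_set1_le S i x : i \in S ->
  bucket_weight (wf_buckets N s A [set i]) x <= bucket_weight (wf_buckets N s A S) x.
Proof.
move=> iS; rewrite !bucket_weight_wf_buckets !wf_rowsE enum_set1 /= cats0.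
rewrite big_flatten big_map (bigD1_seq i) ?mem_enum ?enum_uniq //= lerDl.
by apply: sumr_ge0 => l _; apply: sumr_ge0 => v _; apply: norm_ge0.
Qed.

Lemma wf_strategy_set1_dominated S i : i \in S ->
  exists D, D *m wf_strategy N s A S = wf_strategy N s A [set i] /\
            forall p (X : 'M[R]_(p, _)), frob2 (X *m D) <= frob2 X.
Proof.
move=> iS; apply: bucket_mx_dominated => [||| x _].
- exact: pos_weights_wf_buckets.
- exact: uniq_keys_wf_buckets.
- exact: uniq_keys_wf_buckets.
- exact: bucket_weight_wf_buckets_set1_le.
Qed.

Lemma direction_in_keys_wf_buckets S v :
  v \in wf_rows s A S -> (N v)^-1 *: v \in bucket_keys (wf_buckets N s A S).
Proof.
move=> vS; have v0 : v != 0 by apply: (allP (wf_rows_neq0 S)).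
have : 0 < bucket_weight (wf_buckets N s A S) ((N v)^-1 *: v).
  rewrite bucket_weight_wf_buckets (big_rem v) //= eqxx ltr_pwDl ?norm_gt0 //.
  by apply: sumr_ge0 => u _; apply: norm_ge0.
by apply: contraTT => /bucket_weight_notin ->; rewrite ltxx.
Qed.

Lemma strategy_sub_wf_strategy_set1 i : 0 < s i -> (A i <= wf_strategy N s A [set i])%MS.
Proof.
move=> si_gt0; apply/row_subP => r; have [->|Ar0] := eqVneq (row r (A i)) 0.
  exact: sub0mx.
set v := row r (s i *: A i).
have vE : v = s i *: row r (A i) by apply/rowP => j; rewrite !mxE.
have v0 : v != 0 by rewrite vE scaler_eq0 negb_or gt_eqF.
have vS : v \in wf_rows s A [set i].
  rewrite wf_rowsE enum_set1 /= cats0; apply/mapP; exists r => //.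
  by rewrite mem_filter mem_enum andbT.
have -> : row r (A i) = ((s i)^-1 * N v) *: ((N v)^-1 *: v).
  by rewrite scalerA mulfK ?gt_eqF ?norm_gt0 // vE scalerA mulVf ?gt_eqF ?scale1r.
rewrite scalemx_sub // key_sub_bucket_mx ?pos_weights_wf_buckets //.
exact: direction_in_keys_wf_buckets.
Qed.

Lemma Err_wf S i : eps != 0 -> i \in S ->
  (forall l, l \in S -> 0 < s l) ->
  (forall l, l \in S -> forall j : 'I_n, \sum_(r < k l) `|A l r j| = 1) ->
  Err N s A eps W S i
  = (n != 0)%:R * (2 / eps ^+ 2) * frob2 (W i *m mpinv (wf_strategy N s A S)).
Proof.
move=> eps0 iS s_gt0 colA; rewrite /Err /eps_S norm1_wf_strategy //.
have sum_gt0 : 0 < \sum_(l in S) s l.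
  rewrite (bigD1 i) //= ltr_pwDl ?s_gt0 //.
  by apply: sumr_ge0 => l /andP[/s_gt0/ltW].
congr (_ * _); case: (n != 0) => /=; last by rewrite !mul0r expr0n /= mulr0 !mul0r.
by field; rewrite eps0 gt_eqF.
Qed.

End Waterfilling.

Theorem mainTheorem2 (R : realType) (n : nat) (N : 'rV[R]_n -> R)
  (HN : is_norm N) (eps : R) (Heps : 0 < eps)
  (I : finType) (p k : I -> nat) (s : I -> R)
  (W : forall l : I, 'M[R]_(p l, n)) (A : forall l : I, 'M[R]_(k l, n))
  (S : {set I}) (HS : S != set0)
  (Hs : forall l, l \in S -> 0 < s l)
  (HWA : forall l, l \in S -> W l = W l *m mpinv (A l) *m A l)
  (Hcol : forall l, l \in S -> forall j : 'I_n, \sum_(r < k l) `|A l r j| = 1)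
  (i : I) (Hi : i \in S) :
  Err N s A eps W S i <= Err N s A eps W [set i] i.
Proof.
(* [HS] follows from [Hi]. *)
have memS l : l \in [set i] -> l \in S by rewrite inE => /eqP->.
rewrite !Err_wf ?(gt_eqF Heps) ?set11 // => [|l /memS/Hs|l /memS/Hcol] //.
apply: ler_wpM2l; first by rewrite mulr_ge0 ?divr_ge0 ?ler0n ?exprn_ge0 ?ltW.
have [D [DAS D_le]] := wf_strategy_set1_dominated HN s A Hi.
apply: frob2_mulmx_mpinv_factor_le DAS (D_le _).
apply: submx_trans (strategy_sub_wf_strategy_set1 HN A (Hs i Hi)).
by rewrite (HWA i Hi) submxMl.
Qed.
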